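(* For all integers $d,m>1$ there is an ortholattice identity $\sigma_{d,m}(\bar z,\bar x)$ in the $d+1+m$ variables $\bar z=(z_0,\ldots,z_d)$, $\bar x=(x_1,\ldots,x_m)$ such that for every infinite simple modular ortholattice $L$ of height $d(L)=d$: $\sigma_{d,m}$ fails in $L$, but $\sigma_{d,m}$ is satisfied in $L$ under every assignment which gives the same value to at least two of the variables $x_1,\ldots,x_m$.
   Context: A modular ortholattice (MOL) is a modular lattice with bounds $0,1$ together with an orthocomplementation $x\mapsto x'$ (an order-reversing involution with $x\wedge x'=0$, $x\vee x'=1$). $L$ has height $d(L)=d$ if some (equivalently every) maximal chain in $L$ has $d+1$ elements. Simplicity refers to the ortholattice signature $(\vee,\wedge,{}',0,1)$. An ortholattice identity is an equation between terms in $\vee,\wedge,{}',0,1$. *)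

From Stdlib Require Import List.
From mathcomp Require Import all_boot.
Set Implicit Arguments. Unset Strict Implicit. Unset Printing Implicit Defensive.

Record MOL := {
  carrier :> Type;
  ojoin : carrier -> carrier -> carrier;
  omeet : carrier -> carrier -> carrier;
  ocompl : carrier -> carrier;
  obot : carrier;
  otop : carrier;
  joinC : forall x y, ojoin x y = ojoin y x;
  meetC : forall x y, omeet x y = omeet y x;
  joinA : forall x y z, ojoin x (ojoin y z) = ojoin (ojoin x y) z;
  meetA : forall x y z, omeet x (omeet y z) = omeet (omeet x y) z;
  joinKmeet : forall x y, ojoin x (omeet x y) = x;
  meetKjoin : forall x y, omeet x (ojoin x y) = x;
  join_bot : forall x, ojoin x obot = x;
  meet_top : forall x, omeet x otop = x;
  complK : forall x, ocompl (ocompl x) = x;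
  compl_antitone : forall x y, omeet x y = x -> omeet (ocompl y) (ocompl x) = ocompl y;
  meet_compl : forall x, omeet x (ocompl x) = obot;
  join_compl : forall x, ojoin x (ocompl x) = otop;
  modular : forall x y z, omeet x z = x ->
     ojoin x (omeet y z) = omeet (ojoin x y) z
}.

Definition ole (L : MOL) (x y : L) : Prop := omeet x y = x.
Definition olt (L : MOL) (x y : L) : Prop := ole x y /\ x <> y.
Definition covers (L : MOL) (x y : L) : Prop :=
  olt x y /\ forall z, ole x z -> ole z y -> z = x \/ z = y.

(** L has height d: some maximal chain has d+1 elements, i.e. there is a chain
    0 = a_0 < a_1 < ... < a_d = 1 in which each a_(i+1) covers a_i
    (such a finite chain of covers from 0 to 1 is exactly a finite maximal chain). *)
Definition has_height (L : MOL) (d : nat) : Prop :=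
  exists a : nat -> L, a 0 = obot L /\ a d = otop L /\
    forall i, i < d -> covers (a i) (a i.+1).

Definition congruence (L : MOL) (R : L -> L -> Prop) : Prop :=
  (forall x, R x x) /\ (forall x y, R x y -> R y x) /\
  (forall x y z, R x y -> R y z -> R x z) /\
  (forall x x' y y', R x x' -> R y y' -> R (ojoin x y) (ojoin x' y')) /\
  (forall x x' y y', R x x' -> R y y' -> R (omeet x y) (omeet x' y')) /\
  (forall x x', R x x' -> R (ocompl x) (ocompl x')).

Definition simple (L : MOL) : Prop :=
  obot L <> otop L /\
  forall R : L -> L -> Prop, congruence R -> (forall x y, R x y -> x = y) \/ (forall x y, R x y).

Definition infinite (L : MOL) : Prop := ~ exists s : list L, forall x : L, In x s.

Inductive term (V : Type) : Type :=
  | tvar : V -> term V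
  | tjoin : term V -> term V -> term V
  | tmeet : term V -> term V -> term V
  | tcompl : term V -> term V
  | tzero : term V
  | tone : term V.

Fixpoint eval (V : Type) (L : MOL) (a : V -> L) (t : term V) : L :=
  match t with
  | tvar v => a v
  | tjoin s u => ojoin (eval a s) (eval a u)
  | tmeet s u => omeet (eval a s) (eval a u)
  | tcompl s => ocompl (eval a s)
  | tzero => obot L
  | tone => otop L
  end.

Definition sat (V : Type) (L : MOL) (a : V -> L) (s t : term V) : Prop :=
  eval a s = eval a t.

From mathcomp Require Import all_boot.
From Stdlib Require Import List Classical.
From mathcomp Require Import zify.

Set Implicit Arguments. Unset Strict Implicit.

(** Call a family of elements a fan with base [e] and apex [l] (e <> l) if any
    two distinct members meet in [e] and join to [l].  The identity is
      σ_{d,m} :  ⋀_{i <> j} (x_i ∨ x_j) ∧ (x_i ∧ x_j)' = 0 .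
    If two of the x_i coincide, one conjunct is x ∧ x' = 0, so σ holds.  If
    x_1,...,x_m is a fan with base e < l, every conjunct equals l ∧ e', which is
    nonzero by modularity, so σ fails.  It remains to find fans of every size
    in an infinite modular ortholattice of finite height; we prove the
    contrapositive: if all fans are finite, then L is finite.  This goes by
    induction along a maximal chain 0 = a_0 ≺ ... ≺ a_d = 1: when c ≺ b and
    only finitely many elements lie below c, the elements below b but not
    below c are sorted by their meet e with c and, for a fixed x0, by
    (x0 ∨ y) ∧ c; every such class is a fan, hence finite. *)

Lemma meetI (L : MOL) (x : L) : omeet x x = x.
Proof. have H := meetKjoin x (omeet x x). by rewrite joinKmeet in H. Qed.

Lemma joinI (L : MOL) (x : L) : ojoin x x = x.
Proof. have H := joinKmeet x (ojoin x x). by rewrite meetKjoin in H. Qed.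

Lemma meet0 (L : MOL) (x : L) : omeet (obot L) x = obot L.
Proof. have H := meetKjoin (obot L) x. by rewrite joinC join_bot in H. Qed.

Lemma ole_join (L : MOL) (x y : L) : ole x y <-> ojoin x y = y.
Proof.
split => H.
- by rewrite -H joinC meetC joinKmeet.
- rewrite /ole -H. exact: meetKjoin.
Qed.

Lemma ole_refl (L : MOL) (x : L) : ole x x.
Proof. exact: meetI. Qed.

Lemma ole_trans (L : MOL) (x y z : L) : ole x y -> ole y z -> ole x z.
Proof. rewrite /ole => H1 H2. by rewrite -H1 -meetA H2. Qed.

Lemma meet_lb_l (L : MOL) (x y : L) : ole (omeet x y) x.
Proof. by rewrite /ole meetC meetA meetI. Qed.

Lemma meet_lb_r (L : MOL) (x y : L) : ole (omeet x y) y.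
Proof. by rewrite /ole -meetA meetI. Qed.

Lemma meet_glb (L : MOL) (x y z : L) : ole z x -> ole z y -> ole z (omeet x y).
Proof. rewrite /ole => H1 H2. by rewrite meetA H1 H2. Qed.

Lemma join_ub_l (L : MOL) (x y : L) : ole x (ojoin x y).
Proof. exact: meetKjoin. Qed.

Lemma join_ub_r (L : MOL) (x y : L) : ole y (ojoin x y).
Proof. rewrite joinC. exact: meetKjoin. Qed.

Lemma join_lub (L : MOL) (x y z : L) : ole x z -> ole y z -> ole (ojoin x y) z.
Proof.
move=> /ole_join H1 /ole_join H2. apply/ole_join. by rewrite -joinA H2 H1.
Qed.

Lemma ole_top (L : MOL) (x : L) : ole x (otop L).
Proof. exact: meet_top. Qed.

Lemma relcompl_neq0 (L : MOL) (e l : L) :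
  ole e l -> e <> l -> omeet l (ocompl e) <> obot L.
Proof.
move=> Hel Hne E; apply: Hne.
have := modular (ocompl e) Hel.
by rewrite join_compl (meetC (otop L)) meet_top (meetC (ocompl e)) E join_bot.
Qed.

Lemma fan_base_le (L : MOL) (y y' e l : L) :
  ojoin y y' = l -> omeet y y' = e -> ole e l.
Proof. move=> <- <-. exact: ole_trans (meet_lb_l _ _) (join_ub_l _ _). Qed.

Definition finite_pred (L : MOL) (P : L -> Prop) : Prop :=
  exists s : list L, forall x, P x -> In x s.

Lemma finite_sub (L : MOL) (P Q : L -> Prop) :
  (forall x, P x -> Q x) -> finite_pred Q -> finite_pred P.
Proof. move=> H [s Hs]. exists s => x /H. exact: Hs. Qed.

Lemma finite_union (L : MOL) (P Q : L -> Prop) :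
  finite_pred P -> finite_pred Q -> finite_pred (fun x => P x \/ Q x).
Proof.
move=> [s Hs] [t Ht]. exists (s ++ t) => x [/Hs|/Ht] H; apply: in_or_app; tauto.
Qed.

Lemma finite_bigunion (L : MOL) (P : L -> Prop) (Q : L -> L -> Prop) :
  finite_pred P -> (forall e, P e -> finite_pred (Q e)) ->
  finite_pred (fun x => exists e, P e /\ Q e x).
Proof.
move=> [s Hs] HQ.
suff: finite_pred (fun x => exists e, In e s /\ P e /\ Q e x).
  apply: finite_sub => x [e [Pe Qe]]. exists e. by split; [exact: Hs|].
elim: s {Hs} => [|e s [t Ht]]; first by exists nil => x [e [[] _]].
have Hrest x e' : In e' s -> P e' -> Q e' x -> In x t.
  by move=> Hin Pe' Qe'; apply: Ht; exists e'.
case: (classic (P e)) => Pe.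
- have [u Hu] := HQ e Pe.
  exists (u ++ t) => x [e' [[<-|Hin] [Pe' Qe']]]; apply: in_or_app; eauto.
- by exists t => x [e' [[<-|Hin] [Pe' Qe']]]; eauto.
Qed.

Lemma finite_of_pigeonhole (L : MOL) (n : nat) (P : L -> Prop) :
  (forall f : nat -> L, (forall i, i < n -> P (f i)) ->
     exists i j, i < n /\ j < n /\ i <> j /\ f i = f j) -> finite_pred P.
Proof.
elim: n P => [|n IH] P H.
  have [i [j [Hi _]]] := H (fun _ => obot L) (fun i (Hi : i < 0) => ltac:(lia)). lia.
case: (classic (exists p, P p)) => [[p Pp]|NP]; last first.
  by exists nil => x Px; apply: NP; exists x.
have [s Hs] : finite_pred (fun x => P x /\ x <> p).
  apply: IH => f Hf.
  pose g i := if i == n then p else f i.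
  have Hg i : i < n.+1 -> P (g i).
    rewrite /g; case: eqP => // Ein Hi. apply: (proj1 (Hf i _)); lia.
  have [i [j [Hi [Hj [Hij]]]]] := H g Hg.
  rewrite /g; case: eqP => Ein; case: eqP => Ejn Heq.
  - lia.
  - by case: (Hf j ltac:(lia)); rewrite Heq.
  - by case: (Hf i ltac:(lia)); rewrite Heq.
  - exists i, j. repeat split => //; lia.
exists (p :: s) => x Px. case: (classic (x = p)) => [->|Hx]; first by left.
right; exact: Hs.
Qed.

Section Covering.
Variable L : MOL.
Variables c b : L.
Hypothesis cov : covers c b.

Definition slice (e x : L) : Prop := ole x b /\ ~ ole x c /\ omeet x c = e.

Lemma cover_le : ole c b.
Proof. by case: cov => [[]]. Qed.

Lemma join_cover x : ole x b -> ~ ole x c -> ojoin c x = b.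
Proof.
move=> Hxb Hxc. case: cov => _ Hc.
case: (Hc (ojoin c x) (join_ub_l _ _) (join_lub cover_le Hxb)) => // Heq.
case: Hxc. rewrite -Heq. exact: join_ub_r.
Qed.

Lemma slice_bounds e x : slice e x -> ole e x /\ ole e c.
Proof. move=> [_ [_ <-]]. split; [exact: meet_lb_l|exact: meet_lb_r]. Qed.

(** Transposition: x covers e = x ∧ c, since [e, x] ≅ [c, x ∨ c] = [c, b]. *)
Lemma slice_covers e x w : slice e x -> ole e w -> ole w x -> w = e \/ w = x.
Proof.
move=> [Hxb [Hxc Hxe]] Hew Hwx.
have Hm := modular c Hwx.
rewrite meetC Hxe (joinC w e) (proj1 (ole_join e w) Hew) in Hm.
case: cov => _ Hc.
case: (Hc (ojoin w c) (join_ub_r _ _) (join_lub (ole_trans Hwx Hxb) cover_le))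
  => Heq; rewrite Heq in Hm.
- by left; rewrite Hm meetC.
- by right; rewrite Hm meetC; exact: Hxb.
Qed.

Lemma slice_meet e y y' : slice e y -> slice e y' -> y <> y' -> omeet y y' = e.
Proof.
move=> Hy Hy' Hne.
have [ey ec] := slice_bounds Hy. have [ey' _] := slice_bounds Hy'.
case: (slice_covers Hy (meet_glb ey ey') (meet_lb_l _ _)) => // Heq.
have Hyy' : ole y y' by rewrite -Heq; exact: meet_lb_r.
case: (slice_covers Hy' ey Hyy') => // Hye.
by case: Hy => _ [Hyc _]; case: Hyc; rewrite Hye.
Qed.

(** Transposition again: x0 ∨ y covers y for x0, y in the same slice. *)
Lemma slice_join_covers e x0 y w : slice e x0 -> slice e y ->
  ole y w -> ole w (ojoin x0 y) -> w = y \/ w = ojoin x0 y.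
Proof.
move=> Hx0 Hy Hyw Hwl.
have Hm := modular x0 Hyw.
rewrite (joinC y x0) (meetC (ojoin x0 y) w) Hwl in Hm.
have [ey _] := slice_bounds Hy. have [ex0 _] := slice_bounds Hx0.
case: (slice_covers Hx0 (meet_glb ex0 (ole_trans ey Hyw)) (meet_lb_l _ _))
  => Heq; rewrite Heq in Hm.
- by left; rewrite -Hm joinC; apply/ole_join.
- by right; rewrite -Hm joinC.
Qed.

Lemma join_trace e x0 y : slice e x0 -> ole (ojoin x0 y) b ->
  ojoin x0 (omeet (ojoin x0 y) c) = ojoin x0 y.
Proof.
move=> [Hxb [Hxc _]] Hl.
by rewrite meetC (modular c (join_ub_l x0 y)) joinC (join_cover Hxb Hxc) meetC.
Qed.

(** The elements of the slice over e whose join with x0 has trace r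
    (together with x0 itself) form a fan with base e and apex x0 ∨ r. *)
Definition fiber (e x0 r y : L) : Prop :=
  slice e y /\ (y = x0 \/ omeet (ojoin x0 y) c = r).

Lemma fiber_join e x0 r z : slice e x0 -> fiber e x0 r z -> z <> x0 ->
  ojoin x0 z = ojoin x0 r.
Proof.
move=> Hx0 [Hz [//|<-]] _. symmetry.
exact: join_trace Hx0 (join_lub (proj1 Hx0) (proj1 Hz)).
Qed.

Lemma fiber_fan e x0 r y y' : slice e x0 -> fiber e x0 r y -> fiber e x0 r y' ->
  y <> y' -> ojoin y y' = ojoin x0 r /\ omeet y y' = e.
Proof.
move=> Hx0 Fy Fy' Hne. have [Hy _] := Fy. have [Hy' _] := Fy'.
split; last exact: slice_meet.
case: (classic (y = x0)) => [Eyx|Nyx].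
  by subst y; apply: (fiber_join Hx0 Fy') => E; apply: Hne.
case: (classic (y' = x0)) => [Eyx'|Nyx'].
  by subst y'; rewrite joinC; apply: (fiber_join Hx0 Fy).
have Jy := fiber_join Hx0 Fy Nyx. have Jy' := fiber_join Hx0 Fy' Nyx'.
rewrite -Jy.
have Hw : ole (ojoin y y') (ojoin x0 y).
  apply: join_lub; first exact: join_ub_r.
  rewrite Jy -Jy'. exact: join_ub_r.
case: (slice_join_covers Hx0 Hy (join_ub_l y y') Hw) => // Heq.
have Hy'y : ole y' y by rewrite -Heq; exact: join_ub_r.
have Hm := slice_meet Hy Hy' Hne.
rewrite meetC Hy'y in Hm.
case: Hy' => _ [Hc _]; case: Hc; rewrite Hm. exact: (proj2 (slice_bounds Hy)).
Qed.

End Covering.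

Definition fans_finite (L : MOL) : Prop :=
  forall (e l : L) (P : L -> Prop), e <> l ->
  (forall y y', P y -> P y' -> y <> y' -> ojoin y y' = l /\ omeet y y' = e) ->
  finite_pred P.

Section FiniteHeight.
Variable L : MOL.
Hypothesis fansL : fans_finite L.

(** Each slice is a union of fibers indexed by traces r ≤ c, hence finite. *)
Lemma slice_finite (c b e : L) : covers c b ->
  finite_pred (fun x => ole x c) -> finite_pred (slice c b e).
Proof.
move=> cov Fc.
case: (classic (exists x0, slice c b e x0)) => [[x0 Hx0]|NX]; last first.
  by exists nil => x Hx; apply: NX; exists x.
have Ffib r : ole r c -> finite_pred (fiber c b e x0 r).
  move=> _. apply: (@fansL e (ojoin x0 r)); last first.
    by move=> y y' Fy Fy' Hne; exact: (fiber_fan cov Hx0 Fy Fy' Hne).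
  move=> E. case: (Hx0) => _ [Hc _]. apply: Hc.
  apply: (ole_trans (join_ub_l x0 r)). rewrite -E.
  exact: (proj2 (slice_bounds Hx0)).
apply: (finite_sub _ (finite_bigunion Fc Ffib)) => y Hy.
case: (classic (y = x0)) => [->|Ne].
- exists c. split; [exact: ole_refl | by split; [|left]].
- exists (omeet (ojoin x0 y) c). split; [exact: meet_lb_r | by split; [|right]].
Qed.

Lemma cover_finite (c b : L) : covers c b ->
  finite_pred (fun x => ole x c) -> finite_pred (fun x => ole x b).
Proof.
move=> cov Fc.
have FX := finite_bigunion Fc (fun e _ => slice_finite e cov Fc).
apply: (finite_sub _ (finite_union Fc FX)) => x Hxb.
case: (classic (ole x c)) => Hxc; [by left | right].
exists (omeet x c). split; [exact: meet_lb_r | by repeat split].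
Qed.

Lemma height_finite d : has_height L d -> finite_pred (fun x : L => True).
Proof.
move=> [a [Ha0 [Had Hcov]]].
have H k : k <= d -> finite_pred (fun x => ole x (a k)).
  elim: k => [_|k IH Hk].
  - exists (obot L :: nil) => x. rewrite Ha0 /ole meetC meet0 => <-. by left.
  - apply: (cover_finite (Hcov k _) (IH _)); lia.
apply: (finite_sub _ (H d (leqnn d))) => x _. rewrite Had. exact: ole_top.
Qed.

End FiniteHeight.

Lemma large_fan (L : MOL) d n : infinite L -> has_height L d ->
  exists (e l : L) (f : nat -> L), e <> l /\
    forall i j, i < n -> j < n -> i <> j ->
      ojoin (f i) (f j) = l /\ omeet (f i) (f j) = e.
Proof.
move=> Hinf Hh. apply: NNPP => Hnf. apply: Hinf.
suff [s Hs] : finite_pred (fun x : L => True) by exists s => x; exact: Hs.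
apply: (height_finite _ Hh) => e l P Hel HP.
apply: (finite_of_pigeonhole (n := n)) => f Hf.
apply: NNPP => Hn. apply: Hnf. exists e, l, f. split => // i j Hi Hj Hij.
apply: HP (Hf i Hi) (Hf j Hj) _ => E. by apply: Hn; exists i, j.
Qed.

Definition meet_over (V X : Type) (F : X -> term V) (s : list X) : term V :=
  foldr (fun x acc => tmeet (F x) acc) (tone V) s.

Lemma eval_meet_over0 (V : Type) (X : eqType) (L : MOL) (a : V -> L)
    (F : X -> term V) (s : list X) x :
  x \in s -> eval a (F x) = obot L -> eval a (meet_over F s) = obot L.
Proof.
elim: s => [//|y s IH]. rewrite inE => /orP [/eqP <-|Hin] H /=.
- by rewrite H meet0.
- by rewrite IH // meetC meet0.
Qed.

Lemma eval_meet_over_top_or (V X : Type) (L : MOL) (a : V -> L)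
    (F : X -> term V) (s : list X) (w : L) :
  (forall x, eval a (F x) = otop L \/ eval a (F x) = w) ->
  eval a (meet_over F s) = otop L \/ eval a (meet_over F s) = w.
Proof.
move=> H. elim: s => [|x s IH] /=; first by left.
case: (H x) => ->; case: IH => ->.
- by left; rewrite meet_top.
- by right; rewrite meetC meet_top.
- by right; rewrite meet_top.
- by right; rewrite meetI.
Qed.

Definition sep_term (V : Type) (u v : V) : term V :=
  tmeet (tjoin (tvar u) (tvar v)) (tcompl (tmeet (tvar u) (tvar v))).

Definition fan_term d m : term ('I_d.+1 + 'I_m) :=
  meet_over (fun p : 'I_m * 'I_m =>
               if p.1 == p.2 then tone _ else sep_term (inr p.1) (inr p.2))
            (enum {: 'I_m * 'I_m}).

Lemma fan_term_repeat d m (L : MOL) (a : 'I_d.+1 + 'I_m -> L) (i j : 'I_m) :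
  i <> j -> a (inr i) = a (inr j) -> eval a (fan_term d m) = obot L.
Proof.
move=> Hij Ha. apply: (eval_meet_over0 (x := (i, j))); first by rewrite mem_enum.
rewrite /=; case: eqP => // _. by rewrite /= Ha joinI meetI meet_compl.
Qed.

Lemma fan_term_fan d m (L : MOL) (a : 'I_d.+1 + 'I_m -> L) (e l : L) :
  ole e l -> e <> l ->
  (forall i j : 'I_m, i <> j ->
     ojoin (a (inr i)) (a (inr j)) = l /\ omeet (a (inr i)) (a (inr j)) = e) ->
  eval a (fan_term d m) <> obot L.
Proof.
move=> Hel Hne Hfan.
have Hw := relcompl_neq0 Hel Hne.
have Htop : otop L <> obot L.
  by move=> E; apply: Hw; rewrite -[omeet _ _]meet_top E meetC meet0.
suff : eval a (fan_term d m) = otop L \/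
       eval a (fan_term d m) = omeet l (ocompl e) by case=> ->.
apply: eval_meet_over_top_or => -[i j] /=.
case: eqP => Eij; first by left.
by right => /=; have [-> ->] := Hfan i j Eij.
Qed.

Theorem mainTheorem5 :
  forall d m : nat, 1 < d -> 1 < m ->
  exists s t : term ('I_d.+1 + 'I_m),
    forall L : MOL, infinite L -> simple L -> has_height L d ->
      (exists a : 'I_d.+1 + 'I_m -> L, ~ sat a s t) /\
      (forall a : 'I_d.+1 + 'I_m -> L,
         (exists i j : 'I_m, i <> j /\ a (inr i) = a (inr j)) -> sat a s t).
Proof.
move=> d m _ Hm. exists (fan_term d m), (tzero _).
move=> L Hinf _ Hh. split; last first.
  by move=> a [i [j [Hij Ha]]]; exact: fan_term_repeat Hij Ha.
have [e [l [f [Hne Hf]]]] := large_fan m Hinf Hh.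
have [Hj01 Hm01] := Hf 0 1 ltac:(lia) Hm ltac:(lia).
exists (fun v => match v with inl _ => obot L | inr i => f (nat_of_ord i) end).
apply: (fan_term_fan (fan_base_le Hj01 Hm01) Hne) => i j Hij.
apply: Hf; [exact: ltn_ord | exact: ltn_ord | by move=> /ord_inj].
Qed.
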